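(* Let $(G,u,v,\alpha,\beta)$ be a Guvab with $\lim_{k\to\infty}W_k=\frac12$ and $\beta<1$. Then there exists $N$ such that for all $k\ge N$, $$\left|W_k-\tfrac12\right|=0.5\,|1-2\beta|^k.$$
   Context: A Guvab is a tuple $(G,u,v,\alpha,\beta)$ where $G$ is a finite, connected, simple graph, $u,v\in V(G)$, and $\alpha,\beta\in[0,1]$ with $\alpha\le\beta$. A random walk on $G$ with starting vertex $w$ and laziness $\gamma$ is the Markov chain $R_0=w$ and, for $i\ge1$, $R_i=R_{i-1}$ with probability $\gamma$ and $R_i=t$ with probability $\frac{1-\gamma}{\deg(R_{i-1})}$ for each neighbor $t$ of $R_{i-1}$. $\mu_k$ is the distribution after $k$ steps of the walk from $u$ with laziness $\alpha$, $\nu_k$ that of the walk from $v$ with laziness $\beta$, and $W_k=W(\mu_k,\nu_k)$ is the Wasserstein ($L^1$ optimal transport) distance with respect to the graph distance: the minimum over transportation plans (nonnegative $T$ on $V(G)\times V(G)$ with marginals $\mu_k,\nu_k$) of $\sum d(w_1,w_2)T(w_1,w_2)$. *)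

From HB Require Import structures.
From mathcomp Require Import all_boot all_order all_algebra.
From mathcomp Require Import all_classical all_reals all_analysis.
Set Implicit Arguments.
Unset Strict Implicit.
Unset Printing Implicit Defensive.
Import Order.TTheory GRing.Theory Num.Theory.
Local Open Scope ring_scope.

Definition simple_graph (T : finType) (e : rel T) : Prop :=
  symmetric e /\ irreflexive e.

Definition connected_graph (T : finType) (e : rel T) : Prop :=
  forall x y : T, connect e x y.

Fixpoint gball (T : finType) (e : rel T) (n : nat) (x : T) : {set T} :=
  match n with
  | 0 => [set x]
  | n'.+1 => gball e n' x :|: [set y | [exists z in gball e n' x, e z y]]
  end.

(* Graph distance: least n with y within distance n of x.  In a connected graph
   on T this is < #|T|; the default #|T| is never reached in that case. *)
Definition gdist (T : finType) (e : rel T) (x y : T) : nat :=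
  \big[minn/#|T|]_(n < #|T| | y \in gball e n x) (n : nat).

Definition gdeg (T : finType) (e : rel T) (x : T) : nat := #|[set y | e x y]|.

Definition walk_step (R : realType) (T : finType) (e : rel T) (g : R)
  (mu : T -> R) : T -> R :=
  fun t => g * mu t + \sum_(s : T | e s t) ((1 - g) / (gdeg e s)%:R) * mu s.

Definition walk_dist (R : realType) (T : finType) (e : rel T) (g : R)
  (w : T) (k : nat) : T -> R :=
  iter k (walk_step e g) (fun t => if t == w then 1 else 0).

Definition transport_plan (R : realType) (T : finType) (mu nu : T -> R)
  (P : T -> T -> R) : Prop :=
  (forall a b, 0 <= P a b) /\
  (forall a, \sum_(b : T) P a b = mu a) /\
  (forall b, \sum_(a : T) P a b = nu b).

(* L^1 Wasserstein distance w.r.t. the graph distance (the minimum over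
   plans; written as the infimum of the attained costs). *)
Definition wasserstein (R : realType) (T : finType) (e : rel T)
  (mu nu : T -> R) : R :=
  inf [set c : R | exists P : T -> T -> R, transport_plan mu nu P /\
         c = \sum_(a : T) \sum_(b : T) (gdist e a b)%:R * P a b].

Definition W_guvab (R : realType) (T : finType) (e : rel T) (u v : T)
  (alpha beta : R) (k : nat) : R :=
  wasserstein e (walk_dist e alpha u k) (walk_dist e beta v k).

From HB Require Import structures.
From mathcomp Require Import all_boot all_order all_algebra.
From mathcomp Require Import all_classical all_reals all_analysis.
From mathcomp Require Import ring lra zify.
Import Order.TTheory GRing.Theory Num.Theory.
Import numFieldNormedType.Exports.
Local Open Scope classical_set_scope.
Local Open Scope ring_scope.
Set Implicit Arguments.
Unset Strict Implicit.
Unset Printing Implicit Defensive.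

(* If 0 < alpha, or if the graph has an odd cycle, both walks are aperiodic
   and converge to the stationary distribution (Doeblin's argument), so
   W_k -> 0.  Otherwise the graph is bipartite and alpha = 0: the simple walk
   from u alternates between the two colour classes.  If also beta = 0, then
   W_k -> 0 or W_k >= 1 according to the classes of u and v.  If beta > 0,
   the mass p_k of the lazy walk lying off the class occupied by the simple
   walk satisfies p_(k+1) - 1/2 = (1 - 2 beta)(p_k - 1/2) with |p_0 - 1/2| =
   1/2.  Moving mass across the cut is a lower bound, W_k >= p_k; for large k
   both walks are close to their limits and a small perturbation of the
   uniform flow across all edges is a transport plan of cost exactly p_k. *)

Section Measures.
Variables (R : realType) (T : finType).

Definition dirac (x : T) : T -> R := fun t => if t == x then 1 else 0.

Definition norm1 (m : T -> R) : R := \sum_x `|m x|.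

Definition balanced (c : T -> bool) (m : T -> R) : Prop :=
  forall b, \sum_(x | c x == b) m x = 0.

Lemma sum_mul_dirac (m : T -> R) y : \sum_x m x * dirac x y = m y.
Proof.
rewrite (bigD1 y) //= /dirac eqxx mulr1 big1 ?addr0 // => x hx.
by rewrite eq_sym (negbTE hx) mulr0.
Qed.

Lemma sum_dirac_cond (P : pred T) x : \sum_(y | P y) dirac x y = (P x)%:R.
Proof.
rewrite big_mkcond (bigD1 x) //= /dirac eqxx big1 ?addr0; first by case: (P x).
by move=> y yx; rewrite (negbTE yx) if_same.
Qed.

Lemma sum_dirac x : \sum_y dirac x y = 1.
Proof. by rewrite (sum_dirac_cond predT). Qed.

Lemma ler_sum_term (F : T -> R) i : (forall j, 0 <= F j) -> F i <= \sum_j F j.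
Proof. by move=> F0; rewrite (bigD1 i) //= lerDl sumr_ge0. Qed.

Lemma norm1_ge0 (m : T -> R) : 0 <= norm1 m.
Proof. exact: sumr_ge0. Qed.

End Measures.
Arguments dirac {R T} x t.

Section MarkovKernel.
Variables (R : realType) (T : finType) (K : T -> T -> R).

Definition kapply (m : T -> R) : T -> R := fun y => \sum_x m x * K x y.

Definition kpow (n : nat) (x : T) : T -> R := iter n kapply (dirac x).

Lemma iter_kapply n m y : iter n kapply m y = \sum_x m x * kpow n x y.
Proof.
elim: n y => [|n IH] y; first by rewrite /= sum_mul_dirac.
rewrite iterS {1}/kapply.
under eq_bigr => x _ do rewrite IH big_distrl /=.
rewrite exchange_big /=; apply: eq_bigr => x _.
by rewrite /kapply big_distrr /=; apply: eq_bigr => z _; rewrite mulrA.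
Qed.

Lemma iter_kapplyB n (m1 m2 : T -> R) y :
  iter n kapply (fun x => m1 x - m2 x) y = iter n kapply m1 y - iter n kapply m2 y.
Proof. by rewrite !iter_kapply -sumrB; apply: eq_bigr => x _; rewrite mulrBl. Qed.

Hypothesis K_ge0 : forall x y, 0 <= K x y.
Hypothesis K_sum1 : forall x, \sum_y K x y = 1.

Lemma sum_kapply m : \sum_y kapply m y = \sum_x m x.
Proof.
rewrite /kapply exchange_big /=; apply: eq_bigr => x _.
by rewrite -big_distrr /= K_sum1 mulr1.
Qed.

Lemma balanced_predT_kapply m : balanced xpredT m -> balanced xpredT (kapply m).
Proof.
move=> Bm [|]; last by rewrite big_pred0.
rewrite (eq_bigl xpredT) // sum_kapply -[RHS](Bm true).
by apply: eq_bigl.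
Qed.

Lemma kpow_ge0 n x y : 0 <= kpow n x y.
Proof.
elim: n y => [|n IH] y /=; first by rewrite /kpow /= /dirac; case: eqP.
by apply: sumr_ge0 => z _; apply: mulr_ge0.
Qed.

Lemma kpow_sum1 n x : \sum_y kpow n x y = 1.
Proof.
elim: n => [|n IH]; first exact: sum_dirac.
by rewrite /kpow iterS sum_kapply.
Qed.

Lemma norm1_iter_le n m : norm1 (iter n kapply m) <= norm1 m.
Proof.
apply: (@le_trans _ _ (\sum_y \sum_x `|m x| * kpow n x y)).
  apply: ler_sum => y _; rewrite iter_kapply.
  apply: (le_trans (ler_norm_sum _ _ _)); apply: ler_sum => x _.
  by rewrite normrM (ger0_norm (kpow_ge0 _ _ _)).
rewrite exchange_big /=; apply: ler_sum => x _.
by rewrite -big_distrr /= kpow_sum1 mulr1.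
Qed.

(* Doeblin's argument: on a balanced m, subtracting d on same-class pairs
   leaves a nonnegative kernel and does not change the image of m. *)
Lemma norm1_iter_doeblin (c : T -> bool) N d m : 0 <= d ->
  (forall x y, c x = c y -> d <= kpow N x y) -> balanced c m ->
  norm1 (iter N kapply m) <= (1 - d) * norm1 m.
Proof.
move=> d0 hd Bm.
pose L x y := kpow N x y - d * (c x == c y)%:R.
have L_ge0 x y : 0 <= L x y.
  rewrite /L; case: (boolP (c x == c y)) => [/eqP /hd|_]; first by rewrite mulr1 subr_ge0.
  by rewrite mulr0 subr0 kpow_ge0.
have iterE y : iter N kapply m y = \sum_x m x * L x y.
  rewrite iter_kapply /L; under [RHS]eq_bigr do rewrite mulrBr.
  rewrite sumrB; suff -> : \sum_x m x * (d * (c x == c y)%:R) =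
                          d * \sum_(x | c x == c y) m x by rewrite Bm mulr0 subr0.
  rewrite big_distrr [RHS]big_mkcond /=; apply: eq_bigr => x _.
  by case: (c x == c y); rewrite ?mulr1 ?mulr0 // mulrC.
apply: (@le_trans _ _ (\sum_y \sum_x `|m x| * L x y)).
  apply: ler_sum => y _; rewrite iterE; apply: (le_trans (ler_norm_sum _ _ _)).
  by apply: ler_sum => x _; rewrite normrM (ger0_norm (L_ge0 _ _)).
rewrite /norm1 exchange_big big_distrr /=; apply: ler_sum => x _.
rewrite -big_distrr /= mulrC; apply: ler_wpM2r => //.
rewrite /L sumrB kpow_sum1 lerD2l lerN2 -big_distrr /= ler_peMr //.
by rewrite (bigD1 x) //= eqxx lerDl; apply: sumr_ge0 => y _; rewrite ler0n.
Qed.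

Lemma balanced_iter (c : T -> bool) n m :
  (forall m, balanced c m -> balanced c (kapply m)) -> balanced c m ->
  balanced c (iter n kapply m).
Proof. by move=> inv Bm; elim: n => [|n IH] //=; apply: inv. Qed.

Lemma norm1_iter_geometric (c : T -> bool) N d m : 0 <= d <= 1 ->
  (forall x y, c x = c y -> d <= kpow N x y) ->
  (forall m, balanced c m -> balanced c (kapply m)) -> balanced c m ->
  forall k, norm1 (iter k kapply m) <= (1 - d) ^+ (k %/ N) * norm1 m.
Proof.
move=> /andP[d0 d1] hd inv Bm k; rewrite {1}(divn_eq k N).
elim: (k %/ N)%N => [|j IH]; first by rewrite mul0n add0n expr0 mul1r norm1_iter_le.
rewrite mulSn -addnA iterD exprS -mulrA.
apply: le_trans (norm1_iter_doeblin d0 hd (balanced_iter _ inv Bm)) _.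
by apply: ler_wpM2l; rewrite ?subr_ge0.
Qed.

End MarkovKernel.

Lemma cvg_expr_divn (R : realType) (q : R) N : 0 <= q < 1 -> (0 < N)%N ->
  (fun k => q ^+ (k %/ N)) @ \oo --> 0.
Proof.
move=> /andP[q0 q1] N0; have nq1 : `|q| < 1 by rewrite ger0_norm.
apply/cvgrPdist_le => eps eps0.
have /cvgrPdist_le /(_ eps eps0) [J _ HJ] := cvg_expr nq1.
exists (J * N)%N => // k /= hk.
have /= := HJ (k %/ N)%N; rewrite sub0r normrN; apply.
by rewrite -(mulnK J N0); exact: leq_div2r.
Qed.

Lemma squeeze_cvg0 (R : realType) (f g : nat -> R) :
  (forall k, 0 <= f k) -> (forall k, f k <= g k) -> g @ \oo --> 0 -> f @ \oo --> 0.
Proof.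
move=> f0 fg g0; apply: (@squeeze_cvgr _ _ _ _ (cst 0) g) => //; last exact: cvg_cst.
by apply: nearW => k; rewrite f0 fg.
Qed.

Lemma norm1_iter_cvg0 (R : realType) (T : finType) (K : T -> T -> R) (c : T -> bool) N m :
  (forall x y, 0 <= K x y) -> (forall x, \sum_y K x y = 1) -> (0 < N)%N ->
  (forall x y, c x = c y -> 0 < kpow K N x y) ->
  (forall m, balanced c m -> balanced c (kapply K m)) -> balanced c m ->
  (fun k => norm1 (iter k (kapply K) m)) @ \oo --> 0.
Proof.
move=> K_ge0 K_sum1 N0 hpos inv Bm.
pose d := \big[Order.min/1]_(p : T * T | c p.1 == c p.2) kpow K N p.1 p.2.
have d_gt0 : 0 < d by apply: lt_bigmin => // p /eqP /hpos.
have d01 : 0 <= d <= 1 by rewrite ltW //= bigmin_le_id.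
have hd x y : c x = c y -> d <= kpow K N x y.
  by move=> /eqP cxy; exact: (@bigmin_le_cond _ _ _ _ (x, y) _ _ cxy).
have q01 : 0 <= 1 - d < 1.
  by case/andP: d01 => _ d1; rewrite subr_ge0 d1 /= ltrBlDr ltrDl.
apply: (@squeeze_cvg0 _ _ (fun k => (1 - d) ^+ (k %/ N) * norm1 m)) => [k|k|].
- exact: norm1_ge0.
- exact: (norm1_iter_geometric K_ge0 K_sum1 d01 hd inv Bm).
by rewrite -(mul0r (norm1 m)); apply: cvgMr_tmp; exact: cvg_expr_divn q01 N0.
Qed.

Section Walks.
Variables (T : finType) (e : rel T).

Fixpoint has_walk (m : nat) (x y : T) : bool :=
  if m is m'.+1 then [exists z, has_walk m' x z && e z y] else y == x.

Lemma has_walkS m x y z : has_walk m x y -> e y z -> has_walk m.+1 x z.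
Proof. by move=> rxy eyz; apply/existsP; exists y; apply/andP. Qed.

Lemma has_walk1 x y : e x y -> has_walk 1 x y.
Proof. by apply: has_walkS; rewrite /= eqxx. Qed.

Lemma has_walk_cat m n x y z : has_walk m x y -> has_walk n y z -> has_walk (m + n) x z.
Proof.
move=> rxy; elim: n z => [|n IH] z /=; first by move/eqP->; rewrite addn0.
by case/existsP=> t /andP[ryt etz]; rewrite addnS; exact: has_walkS (IH _ ryt) etz.
Qed.

Lemma connect_has_walk x y : connect e x y -> exists m, has_walk m x y.
Proof.
case/connectP=> p; elim: p x => [|z p IH] x /=.
  by move=> _ ->; exists 0%N; rewrite /= eqxx.
case/andP=> exz pz yl; have [m rzy] := IH z pz yl.
by exists (1 + m)%N; exact: has_walk_cat (has_walk1 exz) rzy.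
Qed.

Lemma has_walk_bounded : (forall x y, connect e x y) ->
  exists B, forall x y, exists2 m, (m <= B)%N & has_walk m x y.
Proof.
move=> hconn; pose len x y := xchoose (connect_has_walk (hconn x y)).
exists (\max_(p : T * T) len p.1 p.2) => x y; exists (len x y).
  exact: (@leq_bigmax _ (fun p => len p.1 p.2) (x, y)).
exact: (xchooseP (connect_has_walk (hconn x y))).
Qed.

Hypothesis esym : symmetric e.

Lemma has_walk_sym m x y : has_walk m x y -> has_walk m y x.
Proof.
elim: m x y => [|m IH] x y /=; first by move/eqP->.
case/existsP=> z /andP[rxz ezy]; have eyz : e y z by rewrite esym.
by have := has_walk_cat (has_walk1 eyz) (IH _ _ rxz); rewrite add1n.
Qed.

Lemma has_walk_pad m n x y : (exists z, e y z) -> has_walk m x y ->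
  (m <= n)%N -> odd m = odd n -> has_walk n x y.
Proof.
move=> [z eyz] rxy mn oddmn; rewrite -(subnKC mn).
have -> : (n - m = ((n - m)./2).*2)%N.
  by rewrite -[LHS]odd_double_half oddB // oddmn addbb.
elim: (n - m)./2 => [|j IH]; first by rewrite addn0.
by rewrite doubleS !addnS; apply: has_walkS (has_walkS IH eyz) _; rewrite esym.
Qed.

Lemma bipartition r : (forall x y, connect e x y) ->
  (forall m, has_walk m r r -> ~~ odd m) ->
  exists c : T -> bool, forall x y, e x y -> c y = ~~ c x.
Proof.
move=> hconn even_r; pose len y := xchoose (connect_has_walk (hconn r y)).
exists (fun y => odd (len y)) => x y exy.
have rx : has_walk (len x) r x := xchooseP (connect_has_walk (hconn r x)).
have ry : has_walk (len y) r y := xchooseP (connect_has_walk (hconn r y)).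
have := even_r _ (has_walk_cat (has_walkS rx exy) (has_walk_sym ry)).
by rewrite oddD /=; case: (odd (len x)); case: (odd (len y)).
Qed.

End Walks.

Section WalkDist.
Variables (R : realType) (T : finType) (e : rel T).

Definition walk_kernel (g : R) (x y : T) : R :=
  g * dirac x y + (if e x y then (1 - g) / (gdeg e x)%:R else 0).

Lemma walk_stepE (g : R) : walk_step e g = kapply (walk_kernel g).
Proof.
apply/funext => m; apply/funext => y; rewrite /walk_step /kapply /walk_kernel.
under [RHS]eq_bigr do rewrite mulrDr.
rewrite big_split /=; congr (_ + _).
  by under eq_bigr do rewrite mulrCA; rewrite -big_distrr sum_mul_dirac.
by rewrite [LHS]big_mkcond; apply: eq_bigr => x _; case: (e x y); rewrite ?mulr0 // mulrC.
Qed.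

Lemma walk_distE (g : R) w k : walk_dist e g w k = kpow (walk_kernel g) k w.
Proof. by rewrite /walk_dist walk_stepE. Qed.

Lemma walk_distS (g : R) w k :
  walk_dist e g w k.+1 = kapply (walk_kernel g) (walk_dist e g w k).
Proof. by rewrite !walk_distE. Qed.

Lemma sum_nbr_const x (a : R) : \sum_y (if e x y then a else 0) = a * (gdeg e x)%:R.
Proof. by rewrite -big_mkcond /= sumr_const /gdeg cardsE mulr_natr. Qed.

Lemma walk_kernel_ge0 (g : R) x y : 0 <= g <= 1 -> 0 <= walk_kernel g x y.
Proof.
case/andP=> g0 g1; apply: addr_ge0; first by rewrite /dirac; case: eqP; rewrite ?mulr1 ?mulr0.
by case: (e x y) => //; apply: divr_ge0; rewrite ?subr_ge0.
Qed.

Lemma walk_dist_ge0 (g : R) w k t : 0 <= g <= 1 -> 0 <= walk_dist e g w k t.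
Proof. by move=> g01; rewrite walk_distE; apply: kpow_ge0 => x y; exact: walk_kernel_ge0. Qed.

Hypothesis deg_gt0 : forall x, (0 < gdeg e x)%N.

Lemma deg_neq0 x : (gdeg e x)%:R != 0 :> R.
Proof. by rewrite pnatr_eq0 -lt0n deg_gt0. Qed.

Lemma exists_nbr x : exists y, e x y.
Proof. by have /card_gt0P [y] := deg_gt0 x; rewrite inE; exists y. Qed.

Lemma walk_kernel_sum1 (g : R) x : \sum_y walk_kernel g x y = 1.
Proof.
rewrite big_split /= -big_distrr /= sum_dirac sum_nbr_const mulr1.
by rewrite divfK ?deg_neq0 // addrC subrK.
Qed.

Lemma walk_dist_sum1 (g : R) w k : \sum_t walk_dist e g w k t = 1.
Proof. by rewrite walk_distE; apply: kpow_sum1; exact: walk_kernel_sum1. Qed.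

Lemma walk_dist_gt0 (g : R) m x y : 0 <= g < 1 -> has_walk e m x y -> 0 < walk_dist e g x m y.
Proof.
case/andP=> g0 g1; have g01 : 0 <= g <= 1 by rewrite g0 ltW.
elim: m y => [|m IH] y; first by move/eqP->; rewrite /walk_dist /= /dirac eqxx.
rewrite walk_distS => /existsP [z /andP[rxz ezy]]; rewrite /kapply (bigD1 z) //=.
apply: ltr_pwDl; first apply: mulr_gt0 (IH _ rxz) _.
  rewrite /walk_kernel ezy ltr_wpDl ?divr_gt0 ?subr_gt0 ?ltr0n //.
  by apply: mulr_ge0 => //; rewrite /dirac; case: eqP.
by apply: sumr_ge0 => t _; apply: mulr_ge0; [exact: walk_dist_ge0 | exact: walk_kernel_ge0].
Qed.

Lemma walk_dist_gt0_lazy (g : R) m n x y : 0 < g <= 1 -> (m <= n)%N ->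
  0 < walk_dist e g x m y -> 0 < walk_dist e g x n y.
Proof.
case/andP=> g0 g1 mn; have g01 : 0 <= g <= 1 by rewrite g1 ltW.
rewrite -(subnKC mn); elim: (n - m)%N => [|j IH pos]; first by rewrite addn0.
rewrite addnS walk_distS /kapply (bigD1 y) //=.
apply: ltr_pwDl; first apply: mulr_gt0 (IH pos) _.
  rewrite /walk_kernel /dirac eqxx mulr1 ltr_pwDl //.
  by case: (e y y) => //; apply: divr_ge0; rewrite ?subr_ge0.
by apply: sumr_ge0 => t _; apply: mulr_ge0; [exact: walk_dist_ge0 | exact: walk_kernel_ge0].
Qed.

Lemma walk_dist_primitive (g : R) r : 0 <= g < 1 -> symmetric e ->
  (forall x y, connect e x y) -> (0 < g \/ exists2 m, odd m & has_walk e m r r) ->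
  exists2 N, (0 < N)%N & forall x y, 0 < walk_dist e g x N y.
Proof.
move=> g01 esym hconn; have [B HB] := has_walk_bounded hconn.
case=> [g0 | [m0 odd_m0 rr]].
  exists B.+1 => // x y; have [m mB rxy] := HB x y.
  apply: walk_dist_gt0_lazy (leqW mB) (walk_dist_gt0 g01 rxy).
  by rewrite g0 ltW //; case/andP: g01.
exists (B + m0).*2.+2 => // x y; apply: walk_dist_gt0 => //.
have [a aB rxr] := HB x r; have [b bB rry] := HB r y.
have oddN : odd (B + m0).*2.+2 = false by rewrite /= odd_double.
case: (boolP (odd (a + b))) => oab.
  apply: (has_walk_pad esym (exists_nbr y) (has_walk_cat (has_walk_cat rxr rr) rry)).
    by lia.
  by rewrite oddN !oddD odd_m0; move: oab; rewrite oddD; case: (odd a); case: (odd b).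
apply: (has_walk_pad esym (exists_nbr y) (has_walk_cat rxr rry)); first by lia.
by rewrite oddN (negbTE oab).
Qed.

End WalkDist.

Lemma walk_dist0_has_walk (R : realType) (T : finType) (e : rel T) m x y :
  walk_dist e (0 : R) x m y != 0 -> has_walk e m x y.
Proof.
apply: contraNT; elim: m y => [|m IH] y.
  by rewrite /walk_dist /= => /negbTE ->; rewrite eqxx.
move=> /existsPn none; apply/eqP; rewrite walk_distS /kapply; apply: big1 => z _.
have := none z; rewrite negb_and => /orP [/IH /eqP -> | /negbTE ezy]; first by rewrite mul0r.
by rewrite /walk_kernel ezy mul0r add0r mulr0.
Qed.

Section Wasserstein.
Variables (R : realType) (T : finType) (e : rel T).
Implicit Types (mu nu : T -> R) (P : T -> T -> R).

Definition cost P : R := \sum_a \sum_b (gdist e a b)%:R * P a b.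

Lemma gdist_le_card a b : (gdist e a b <= #|T|)%N.
Proof.
apply: (big_ind (fun k => k <= #|T|)%N) => //; first by move=> x y hx hy; rewrite geq_min hx.
by move=> i _; exact: ltnW.
Qed.

Lemma gdist_le a b (i : 'I_#|T|) : b \in gball e i a -> (gdist e a b <= i)%N.
Proof.
move=> hb; rewrite /gdist -minEnat.
exact: (bigmin_le_cond #|T| (fun n : 'I_#|T| => n : nat) hb).
Qed.

Lemma gdist_xx a : gdist e a a = 0%N.
Proof.
have T0 : (0 < #|T|)%N by apply/card_gt0P; exists a.
by apply/eqP; rewrite -leqn0; apply: (@gdist_le _ _ (Ordinal T0)); rewrite /= inE.
Qed.

Lemma gdist_gt0 a b : a != b -> (0 < gdist e a b)%N.
Proof.
move=> ab; apply: (big_ind (fun k => 0 < k)%N); first by apply/card_gt0P; exists a.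
  by move=> x y hx hy; rewrite leq_min hx.
by move=> i; case: i => [[|i] ?] //=; rewrite inE eq_sym (negbTE ab).
Qed.

Lemma gdist_edge a b : e a b -> a != b -> (gdist e a b <= 1)%N.
Proof.
move=> eab ab; have T1 : (1 < #|T|)%N by rewrite (cardD1 a) (cardD1 b) !inE eq_sym ab.
apply: (@gdist_le _ _ (Ordinal T1)); rewrite /= !inE; apply/orP; right.
by apply/existsP; exists a; rewrite inE eqxx.
Qed.

Lemma cost_ge0 mu nu P : transport_plan mu nu P -> 0 <= cost P.
Proof.
by case=> P0 _; apply: sumr_ge0 => a _; apply: sumr_ge0 => b _; rewrite mulr_ge0.
Qed.

Lemma wasserstein_le_cost mu nu P :
  transport_plan mu nu P -> wasserstein e mu nu <= cost P.
Proof.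
move=> hP; apply: ge_inf; last by exists P.
by exists 0 => c [Q [hQ ->]]; exact: cost_ge0 hQ.
Qed.

Lemma product_plan mu nu : (forall a, 0 <= mu a) -> (forall b, 0 <= nu b) ->
  \sum_a mu a = 1 -> \sum_b nu b = 1 -> transport_plan mu nu (fun a b => mu a * nu b).
Proof.
move=> mu0 nu0 mu1 nu1; split; [|split] => [a b|a|b]; first exact: mulr_ge0.
  by rewrite -big_distrr /= nu1 mulr1.
by rewrite -big_distrl /= mu1 mul1r.
Qed.

(* Every unit of mass that enters A travels distance at least 1. *)
Lemma mass_gain_le_cost mu nu P (A : pred T) : transport_plan mu nu P ->
  \sum_(b | A b) nu b - \sum_(a | A a) mu a <= cost P.
Proof.
case=> P0 [Prow Pcol]; rewrite big_mkcond [X in _ - X]big_mkcond /=.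
have -> : \sum_b (if A b then nu b else 0) = \sum_a \sum_b (if A b then P a b else 0).
  rewrite exchange_big /=; apply: eq_bigr => b _; rewrite -Pcol.
  by case: (A b) => //; rewrite big1.
have -> : \sum_a (if A a then mu a else 0) = \sum_a \sum_b (if A a then P a b else 0).
  by apply: eq_bigr => a _; rewrite -Prow; case: (A a) => //; rewrite big1.
rewrite -sumrB; apply: ler_sum => a _; rewrite -sumrB; apply: ler_sum => b _.
have [<-|ab] := eqVneq a b; first by rewrite subrr gdist_xx mul0r.
have d1 : 1 <= (gdist e a b)%:R :> R by rewrite ler1n gdist_gt0.
have := P0 a b; case: (A a); case: (A b) => /= Pab; nra.
Qed.

Lemma mass_gain_le_wasserstein mu nu (A : pred T) :
  (forall a, 0 <= mu a) -> (forall b, 0 <= nu b) -> \sum_a mu a = 1 -> \sum_b nu b = 1 ->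
  \sum_(b | A b) nu b - \sum_(a | A a) mu a <= wasserstein e mu nu.
Proof.
move=> mu0 nu0 mu1 nu1; apply: lb_le_inf.
  exists (cost (fun a b => mu a * nu b)), (fun a b => mu a * nu b).
  by split => //; exact: product_plan.
by move=> c [P [hP ->]]; exact: mass_gain_le_cost.
Qed.

Lemma coupling_plan mu nu : (forall a, 0 <= mu a) -> (forall a, 0 <= nu a) ->
  \sum_a mu a = \sum_a nu a ->
  exists Q : T -> T -> R, [/\ forall a b, 0 <= Q a b,
    \sum_a \sum_b Q a b <= norm1 (fun a => mu a - nu a) &
    transport_plan mu nu (fun a b => Num.min (mu a) (nu a) * dirac a b + Q a b)].
Proof.
move=> mu0 nu0 mass.
pose m a := Num.min (mu a) (nu a); pose p a := mu a - m a; pose q a := nu a - m a.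
pose s := \sum_a p a.
have m0 a : 0 <= m a by rewrite le_min mu0 nu0.
have p0 a : 0 <= p a by rewrite subr_ge0 ge_min lexx.
have q0 a : 0 <= q a by rewrite subr_ge0 ge_min lexx orbT.
have sq : \sum_a q a = s by rewrite /s !sumrB mass.
have p_div a : p a * s / s = p a.
  have [s0|s_neq0] := eqVneq s 0; last by rewrite mulfK.
  by rewrite (psumr_eq0P (fun i _ => p0 i) s0) ?mul0r.
have q_div b : s * q b / s = q b.
  have [s0|s_neq0] := eqVneq s 0; last by rewrite mulrAC mulfV ?mul1r.
  by rewrite -sq in s0; rewrite (psumr_eq0P (fun i _ => q0 i) s0) ?mulr0 ?mul0r.
have dirac0 a b : 0 <= dirac a b :> R by rewrite /dirac; case: eqP.
exists (fun a b => p a * q b / s); split.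
- by move=> a b; rewrite mulr_ge0 ?mulr_ge0 // invr_ge0 sumr_ge0.
- have -> : \sum_a \sum_b p a * q b / s = \sum_a p a.
    by apply: eq_bigr => a _; rewrite -big_distrl -big_distrr /= sq p_div.
  apply: ler_sum => a _; rewrite /p /m minEle; case: ifP => _; last exact: ler_norm.
  by rewrite subrr normr_ge0.
split; [|split] => [a b|a|b].
- by apply: addr_ge0; apply: mulr_ge0; rewrite ?le_min ?mu0 ?nu0 ?invr_ge0 ?sumr_ge0 ?mulr_ge0.
- rewrite /= big_split /= -big_distrr /= sum_dirac mulr1 -big_distrl -big_distrr /= sq.
  by rewrite p_div /p addrC subrK.
rewrite /= big_split /= (sum_mul_dirac m) -!big_distrl /= -/s q_div.
by rewrite /q addrC subrK.
Qed.

Lemma wasserstein_le_norm1 mu nu : (forall a, 0 <= mu a) -> (forall a, 0 <= nu a) ->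
  \sum_a mu a = \sum_a nu a ->
  wasserstein e mu nu <= #|T|%:R * norm1 (fun a => mu a - nu a).
Proof.
move=> mu0 nu0 mass; have [Q [Q0 Qsum plan]] := coupling_plan mu0 nu0 mass.
apply: le_trans (wasserstein_le_cost plan) _.
apply: le_trans (_ : #|T|%:R * \sum_a \sum_b Q a b <= _); last by rewrite ler_wpM2l.
rewrite /cost big_distrr /=; apply: ler_sum => a _; rewrite big_distrr /=.
apply: ler_sum => b _; rewrite mulrDr /dirac; case: eqP => [<-|_].
  by rewrite gdist_xx !mul0r add0r mulr_ge0.
by rewrite !mulr0 add0r ler_wpM2r // ler_nat gdist_le_card.
Qed.

(* The plan keeps nu on the side A of a cut and sends the flow F across the
   cut edges, each of length 1. *)
Lemma wasserstein_le_cut_flow mu nu (A : pred T) (F : T -> T -> R) :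
  irreflexive e -> (forall x y, e x y -> A x != A y) ->
  (forall b, 0 <= nu b) -> (forall x y, 0 <= F x y) ->
  (forall x, mu x = if A x then nu x + \sum_(y | e x y) F x y else 0) ->
  (forall y, ~~ A y -> \sum_(x | e x y) F x y = nu y) ->
  wasserstein e mu nu <= \sum_(y | ~~ A y) nu y.
Proof.
move=> eirr cut nu0 F0 row col.
pose Q x y := if A x && e x y then F x y else 0.
pose P x y := (if A x then nu x else 0) * dirac x y + Q x y.
have Q0 x y : 0 <= Q x y by rewrite /Q; case: ifP.
have Qrow x : \sum_y Q x y = if A x then \sum_(y | e x y) F x y else 0.
  by rewrite /Q; case: (A x) => /=; [rewrite [RHS]big_mkcond | exact: big1].
have nbr_side x y : e x y -> A x = ~~ A y.
  by move=> /cut; case: (A x); case: (A y).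
have Qcol y : \sum_x Q x y = if A y then 0 else nu y.
  case: ifP => Ay.
    apply: big1 => x _; rewrite /Q; case exy: (e x y); rewrite ?andbF //.
    by rewrite (nbr_side _ _ exy) Ay.
  rewrite -col ?Ay // [RHS]big_mkcond; apply: eq_bigr => x _; rewrite /Q.
  by case exy: (e x y); rewrite ?andbF ?andbT // (nbr_side _ _ exy) Ay.
have plan : transport_plan mu nu P.
  split; [|split] => [x y|x|y].
  - by rewrite /P addr_ge0 // mulr_ge0 //; [case: ifP | rewrite /dirac; case: eqP].
  - rewrite /P big_split /= -big_distrr /= sum_dirac mulr1 Qrow row.
    by case: (A x); rewrite ?addr0.
  rewrite /P big_split /= (sum_mul_dirac (fun x => if A x then nu x else 0)) Qcol.
  by case: (A y); rewrite ?addr0 ?add0r.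
apply: le_trans (wasserstein_le_cost plan) _.
apply: (@le_trans _ _ (\sum_x \sum_y Q x y)).
  apply: ler_sum => x _; apply: ler_sum => y _; rewrite /P mulrDr /dirac.
  case: eqP => [<-|/eqP xy]; first by rewrite gdist_xx !mul0r add0r.
  rewrite !mulr0 add0r /Q; case: ifP => [/andP[_ exy]|_]; last by rewrite mulr0.
  by rewrite -[leRHS]mul1r ler_wpM2r // lern1 gdist_edge // eq_sym.
rewrite exchange_big /= [leRHS]big_mkcond; apply: ler_sum => y _.
by rewrite Qcol; case: (A y).
Qed.

Lemma wasserstein_singleton mu nu : (forall a b : T, a = b) -> wasserstein e mu nu = 0.
Proof.
move=> one; rewrite /wasserstein; set S := [set c | _].
have S0 c : S c -> c = 0.
  case=> P [_ ->]; apply: big1 => a _; apply: big1 => b _.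
  by rewrite (one a b) gdist_xx mul0r.
have [[c Sc]|none] := pselect (exists c, S c).
  suff -> : S = [set 0] by exact: inf1.
  by apply/seteqP; split => [x /S0 -> // | x ->]; rewrite -(S0 c Sc).
suff -> : S = set0 by exact: inf0.
by apply/seteqP; split => x // Sx; apply: none; exists x.
Qed.

End Wasserstein.

Section Stationary.
Variables (R : realType) (T : finType) (e : rel T).
Hypothesis esym : symmetric e.
Hypothesis deg_gt0 : forall x, (0 < gdeg e x)%N.
Hypothesis T_gt0 : (0 < #|T|)%N.

Definition vol : R := \sum_x (gdeg e x)%:R.

Definition stationary (x : T) : R := (gdeg e x)%:R / vol.

Lemma vol_gt0 : 0 < vol.
Proof.
have /card_gt0P [x _] := T_gt0.
by rewrite /vol (bigD1 x) //= ltr_pwDl ?ltr0n // sumr_ge0.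
Qed.

Lemma stationary_ge0 x : 0 <= stationary x.
Proof. by rewrite divr_ge0 // ltW // vol_gt0. Qed.

Lemma stationary_sum1 : \sum_x stationary x = 1.
Proof. by rewrite -big_distrl /= mulfV // gt_eqF // vol_gt0. Qed.

Lemma walk_step_stationary (g : R) : kapply (walk_kernel e g) stationary = stationary.
Proof.
rewrite -walk_stepE; apply/funext => t; rewrite /walk_step.
have -> : \sum_(s | e s t) (1 - g) / (gdeg e s)%:R * stationary s = (1 - g) * stationary t.
  rewrite (eq_bigl (e t)) => [|s]; last by rewrite esym.
  under eq_bigr => s _ do rewrite /stationary mulrA (divfK (deg_neq0 _ deg_gt0 _)).
  by rewrite big_mkcond /= sum_nbr_const /stationary mulrAC -mulrA.
by rewrite -mulrDl addrC subrK mul1r.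
Qed.

Lemma iter_walk_stationary (g : R) k :
  iter k (kapply (walk_kernel e g)) stationary = stationary.
Proof. by elim: k => // k IH; rewrite iterS IH walk_step_stationary. Qed.

Lemma walk_dist_cvg_stationary (g : R) w : 0 <= g <= 1 ->
  (exists2 N, (0 < N)%N & forall x y, 0 < walk_dist e g x N y) ->
  (fun k => norm1 (fun t => walk_dist e g w k t - stationary t)) @ \oo --> 0.
Proof.
move=> g01 [N N0 pos].
suff -> : (fun k => norm1 (fun t => walk_dist e g w k t - stationary t)) =
    (fun k => norm1 (iter k (kapply (walk_kernel e g)) (fun t => dirac w t - stationary t))).
  apply: (norm1_iter_cvg0 (c := xpredT) (N := N)) => //.
  - by move=> x y; exact: walk_kernel_ge0.
  - exact: walk_kernel_sum1.
  - by move=> x y _; rewrite -walk_distE.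
  - by move=> m; apply: balanced_predT_kapply; exact: walk_kernel_sum1.
  case; last by rewrite big_pred0.
  by rewrite (eq_bigl xpredT) // sumrB sum_dirac stationary_sum1 subrr.
apply/funext => k; congr norm1; apply/funext => t.
by rewrite iter_kapplyB iter_walk_stationary walk_distE.
Qed.

Lemma wasserstein_ge0 (mu nu : T -> R) : (forall a, 0 <= mu a) -> (forall b, 0 <= nu b) ->
  \sum_a mu a = 1 -> \sum_b nu b = 1 -> 0 <= wasserstein e mu nu.
Proof.
move=> mu0 nu0 mu1 nu1.
by have := mass_gain_le_wasserstein e pred0 mu0 nu0 mu1 nu1; rewrite !big_pred0_eq subrr.
Qed.

Lemma wasserstein_cvg0 (g1 g2 : R) w1 w2 (rho : nat -> T -> R) :
  0 <= g1 <= 1 -> 0 <= g2 <= 1 ->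
  (fun k => norm1 (fun t => walk_dist e g1 w1 k t - rho k t)) @ \oo --> 0 ->
  (fun k => norm1 (fun t => walk_dist e g2 w2 k t - rho k t)) @ \oo --> 0 ->
  (fun k => wasserstein e (walk_dist e g1 w1 k) (walk_dist e g2 w2 k)) @ \oo --> 0.
Proof.
move=> g1_01 g2_01 cvg1 cvg2.
have mu0 k t : 0 <= walk_dist e g1 w1 k t by exact: walk_dist_ge0.
have nu0 k t : 0 <= walk_dist e g2 w2 k t by exact: walk_dist_ge0.
apply: (@squeeze_cvg0 _ _ (fun k => #|T|%:R *
  (norm1 (fun t => walk_dist e g1 w1 k t - rho k t) +
   norm1 (fun t => walk_dist e g2 w2 k t - rho k t)))) => [k|k|].
- by rewrite wasserstein_ge0 ?walk_dist_sum1.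
- apply: le_trans (wasserstein_le_norm1 e (mu0 k) (nu0 k) _) _.
    by rewrite !walk_dist_sum1.
  apply: ler_wpM2l => //; rewrite /norm1 -big_split /=; apply: ler_sum => t _.
  set a := walk_dist e g1 w1 k t; set b := walk_dist e g2 w2 k t; set r := rho k t.
  have -> : a - b = (a - r) + (r - b) by rewrite addrA subrK.
  by rewrite (le_trans (ler_normD _ _)) // [`|r - b|]distrC.
by rewrite -(mulr0 #|T|%:R) -(addr0 0); apply: cvgMl_tmp; exact: cvgD.
Qed.

End Stationary.
Arguments vol {R T} e.
Arguments stationary {R T} e x.
Arguments stationary_ge0 {R T e}.
Arguments stationary_sum1 {R T e}.

Section Bipartite.
Variables (R : realType) (T : finType) (e : rel T) (c : T -> bool).
Hypothesis esym : symmetric e.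
Hypothesis eirr : irreflexive e.
Hypothesis hconn : forall x y, connect e x y.
Hypothesis c_edge : forall x y, e x y -> c y = ~~ c x.
Hypothesis deg_gt0 : forall x, (0 < gdeg e x)%N.
Hypothesis T_gt0 : (0 < #|T|)%N.

Lemma has_walk_color m x y : has_walk e m x y -> c y = c x (+) odd m.
Proof.
elim: m y => [|m IH] y /=; first by move/eqP->; rewrite addbF.
case/existsP=> z /andP[rxz ezy]; rewrite (c_edge ezy) (IH _ rxz).
by case: (c x); case: (odd m).
Qed.

Lemma walk0_off_class w k x : c x != c w (+) odd k -> walk_dist e (0 : R) w k x = 0.
Proof.
move=> off; apply/eqP; apply: contraNT off => /walk_dist0_has_walk /has_walk_color ->.
exact: eqxx.
Qed.

Lemma sum_class_neg (F : T -> R) b :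
  \sum_(x | c x != b) F x = \sum_(x | c x == ~~ b) F x.
Proof. by apply: eq_bigl => x; case: (c x); case: b. Qed.

Lemma sum_class_compl (F : T -> R) b :
  \sum_(x | c x == b) F x + \sum_(x | c x != b) F x = \sum_x F x.
Proof. by rewrite [RHS](bigID (fun x => c x == b)). Qed.

Lemma walk0_class_mass w k b :
  \sum_(x | c x == b) walk_dist e (0 : R) w k x = (b == c w (+) odd k)%:R.
Proof.
have [->|nb] := eqVneq b (c w (+) odd k).
  rewrite -(walk_dist_sum1 deg_gt0 0 w k) -(sum_class_compl _ (c w (+) odd k)).
  by rewrite [X in _ + X]big1 ?addr0 // => x; exact: walk0_off_class.
by apply: big1 => x /eqP cx; apply: walk0_off_class; rewrite cx.
Qed.

Lemma class_walk_kernel (g : R) s b :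
  \sum_(x | c x == b) walk_kernel e g s x = g * (c s == b)%:R + (1 - g) * (c s != b)%:R.
Proof.
rewrite big_split /= -big_distrr /= sum_dirac_cond; congr (_ + _).
have -> : \sum_(x | c x == b) (if e s x then (1 - g) / (gdeg e s)%:R else 0) =
          \sum_x (if e s x then (c s != b)%:R * ((1 - g) / (gdeg e s)%:R) else 0).
  rewrite big_mkcond; apply: eq_bigr => x _; case esx: (e s x); last by case: ifP.
  by rewrite (c_edge esx); case: (c s); case: b; rewrite ?mul1r ?mul0r.
by rewrite sum_nbr_const -mulrA divfK ?(deg_neq0 _ deg_gt0) // mulrC.
Qed.

Lemma class_kapply (g : R) m b :
  \sum_(x | c x == b) kapply (walk_kernel e g) m x =
  g * \sum_(x | c x == b) m x + (1 - g) * \sum_(x | c x != b) m x.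
Proof.
rewrite /kapply exchange_big /=.
under eq_bigr do rewrite -big_distrr /= class_walk_kernel mulrDr.
rewrite big_split /=; congr (_ + _); rewrite big_distrr /= [RHS]big_mkcond /=;
  by apply: eq_bigr => x _; case: (c x == b); rewrite /= ?mulr1 ?mulr0 // mulrC.
Qed.

Lemma balanced_kapply0 (m : T -> R) : balanced c m -> balanced c (kapply (walk_kernel e 0) m).
Proof.
move=> Bm b; rewrite class_kapply sum_class_neg Bm (Bm (~~ b)).
by rewrite !mulr0 addr0.
Qed.

Lemma class_stationary b : \sum_(x | c x == b) stationary e x = 2^-1 :> R.
Proof.
have E : \sum_(x | c x == b) stationary e x = \sum_(x | c x != b) stationary e x :> R.
  rewrite -{1}(walk_step_stationary esym deg_gt0 0) class_kapply.
  by rewrite mul0r add0r subr0 mul1r.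
have := sum_class_compl (stationary e) b; rewrite stationary_sum1 // -E.
move=> S; lra.
Qed.

Definition stationary_on (b : bool) (x : T) : R := if c x == b then 2 * stationary e x else 0.

Lemma class_stationary_on b' b : \sum_(x | c x == b) stationary_on b' x = (b == b')%:R.
Proof.
have [<-|bb'] := eqVneq b b'.
  rewrite -(mulfV (_ : 2 != 0 :> R)) // -(class_stationary b) big_distrr /=.
  by apply: eq_bigr => x cx; rewrite /stationary_on cx.
by apply: big1 => x /eqP cx; rewrite /stationary_on cx (negbTE bb').
Qed.

Lemma walk_step0_stationary_on b :
  kapply (walk_kernel e 0) (stationary_on b) = stationary_on (~~ b).
Proof.
apply/funext => t; rewrite -walk_stepE /walk_step mul0r add0r subr0.
rewrite (eq_bigl (e t)) => [|s]; last by rewrite esym.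
have nbr s : e t s -> 1 / (gdeg e s)%:R * stationary_on b s = (c t != b)%:R * (2 / vol e).
  move=> ets; rewrite /stationary_on /stationary (c_edge ets) mul1r.
  case: (c t); case: b => /=; rewrite ?mulr0 ?mul0r ?mul1r //;
    by rewrite mulrCA mulKf ?(deg_neq0 _ deg_gt0).
rewrite (eq_bigr _ nbr) {nbr} big_mkcond /= sum_nbr_const /stationary_on /stationary.
by case: (c t); case: b; rewrite /= ?mul0r // mul1r mulrAC -mulrA.
Qed.

Lemma iter_walk0_stationary_on k b :
  iter k (kapply (walk_kernel e 0)) (stationary_on b) = stationary_on (b (+) odd k).
Proof.
elim: k => [|k IH]; first by rewrite addbF.
by rewrite iterS IH walk_step0_stationary_on /= addbN.
Qed.

Lemma walk0_cvg_stationary_on w :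
  (fun k => norm1 (fun t => walk_dist e 0 w k t - stationary_on (c w (+) odd k) t))
    @ \oo --> 0.
Proof.
have [B HB] := has_walk_bounded hconn.
have g01 : 0 <= (0 : R) <= 1 by rewrite lexx ler01.
have g01' : 0 <= (0 : R) < 1 by rewrite lexx ltr01.
suff -> : (fun k => norm1 (fun t => walk_dist e 0 w k t - stationary_on (c w (+) odd k) t)) =
    (fun k => norm1 (iter k (kapply (walk_kernel e 0))
                       (fun t => dirac w t - stationary_on (c w) t))).
  apply: (norm1_iter_cvg0 (c := c) (N := B.*2.+2)) => //.
  - by move=> x y; exact: walk_kernel_ge0.
  - exact: walk_kernel_sum1.
  - move=> x y cxy; rewrite -walk_distE; apply: (walk_dist_gt0 deg_gt0 g01').
    have [m mB rxy] := HB x y.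
    apply: (has_walk_pad esym (exists_nbr deg_gt0 y) rxy); first by lia.
    have := has_walk_color rxy; rewrite cxy /= odd_double /=.
    by case: (odd m); case: (c y).
  - exact: balanced_kapply0.
  move=> b; rewrite sumrB sum_dirac_cond class_stationary_on.
  by rewrite eq_sym subrr.
apply/funext => k; congr norm1; apply/funext => t.
by rewrite iter_kapplyB iter_walk0_stationary_on walk_distE.
Qed.

Lemma wasserstein_ge1_opposite u v k : c v != c u ->
  1 <= wasserstein e (walk_dist e (0 : R) u k) (walk_dist e 0 v k).
Proof.
move=> cuv; have g01 : 0 <= (0 : R) <= 1 by rewrite lexx ler01.
have mu0 x : 0 <= walk_dist e (0 : R) u k x by exact: walk_dist_ge0.
have nu0 x : 0 <= walk_dist e (0 : R) v k x by exact: walk_dist_ge0.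
apply: le_trans (mass_gain_le_wasserstein e (fun x => c x == c v (+) odd k) mu0 nu0 _ _);
  rewrite ?walk_dist_sum1 //= !walk0_class_mass eqxx.
by move: cuv; case: (c v); case: (c u); case: (odd k); rewrite ?subr0.
Qed.

Definition edge_load (C : T -> T -> R) (z : T) : R := \sum_(y | e z y) (C z y + C y z).

Lemma edge_load_lin (C1 C2 : T -> T -> R) (k1 k2 : R) z :
  edge_load (fun a b => k1 * C1 a b + k2 * C2 a b) z =
  k1 * edge_load C1 z + k2 * edge_load C2 z.
Proof. by rewrite /edge_load !big_distrr -big_split /=; apply: eq_bigr => y _; ring. Qed.

Lemma edge_load_sum (F : T -> T -> T -> R) (h : T -> R) z :
  edge_load (fun a b => \sum_x h x * F x a b) z = \sum_x h x * edge_load (F x) z.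
Proof.
rewrite /edge_load; under [RHS]eq_bigr do rewrite big_distrr.
rewrite [RHS]exchange_big /=; apply: eq_bigr => y _; rewrite -big_split /=.
by apply: eq_bigr => x _; rewrite mulrDr.
Qed.

Lemma edge_load_edge z x w : e z x ->
  edge_load (fun a b => dirac z a * dirac x b) w = dirac z w + dirac x w :> R.
Proof.
move=> ezx; rewrite /edge_load big_split /= -big_distrr /= sum_dirac_cond.
under eq_bigr do rewrite mulrC; rewrite -big_distrr /= sum_dirac_cond.
have zx : z != x by apply: contraTneq ezx => ->; rewrite eirr.
rewrite /dirac; case: (eqVneq w z) => [->|wz].
  by rewrite ezx (negbTE zx) /= ?mulr1 ?mul0r ?addr0.
case: (eqVneq w x) => [->|wx]; last by rewrite !mul0r addr0.
by rewrite esym ezx /= ?mul0r ?mulr1 ?add0r.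
Qed.

Definition sign_to (r x : T) : R := if c x == c r then 1 else -1.

(* Balanced vectors are combinations of the [dirac x - sign_to r x * dirac r],
   each of which is the load of an alternating flow along a walk from r to x. *)
Lemma edge_load_pin r m x : has_walk e m r x ->
  exists C, forall z, edge_load C z = dirac x z - sign_to r x * dirac r z.
Proof.
elim: m x => [|m IH] x /=.
  move/eqP->; exists (fun _ _ => 0) => z; rewrite /sign_to eqxx mul1r subrr.
  by apply: big1 => y _; rewrite addr0.
case/existsP=> y /andP[ry eyx]; have [Cy HCy] := IH _ ry.
exists (fun a b => 1 * (dirac y a * dirac x b) + (-1) * Cy a b) => z.
rewrite edge_load_lin edge_load_edge // HCy /sign_to (c_edge eyx).
by case: (c y); case: (c r); rewrite /=; ring.
Qed.

Lemma edge_load_surj : exists K : R, forall h, balanced c h ->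
  exists C, (forall z, edge_load C z = h z) /\ forall a b, `|C a b| <= K * norm1 h.
Proof.
have /card_gt0P [r _] := T_gt0.
have pin x : exists C, forall z, edge_load C z = dirac x z - sign_to r x * dirac r z.
  by have [m] := connect_has_walk (hconn r x); exact: edge_load_pin.
have [P HP] := choice pin.
exists (\sum_x \sum_a \sum_b `|P x a b|) => h Bh; exists (fun a b => \sum_x h x * P x a b); split.
  move=> z; rewrite edge_load_sum; under eq_bigr do rewrite HP mulrBr.
  rewrite sumrB sum_mul_dirac.
  suff -> : \sum_x h x * (sign_to r x * dirac r z) = 0 by rewrite subr0.
  have sgn_pos x : c x == c r -> sign_to r x = 1 by rewrite /sign_to => ->.
  have sgn_neg x : c x == ~~ c r -> sign_to r x = -1.
    by rewrite /sign_to => /eqP ->; case: (c r).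
  under eq_bigr do rewrite mulrA; rewrite -big_distrl /=.
  rewrite (bigID (fun x => c x == c r)) /= sum_class_neg.
  under eq_bigr => x cx do rewrite sgn_pos // mulr1.
  under [X in _ + X]eq_bigr => x cx do rewrite sgn_neg // mulrN1.
  by rewrite sumrN !Bh oppr0 addr0 mul0r.
move=> a b; rewrite big_distrr /=; apply: (le_trans (ler_norm_sum _ _ _)).
apply: ler_sum => x _; rewrite normrM mulrC ler_wpM2r //.
have sum3_ge0 y : 0 <= \sum_a \sum_b `|P y a b| by apply: sumr_ge0 => *; exact: sumr_ge0.
apply: le_trans _ (ler_sum_term x sum3_ge0).
apply: le_trans _ (ler_sum_term (F := fun a => \sum_b `|P x a b|) a _) => [|a'].
  exact: (ler_sum_term (F := fun b => `|P x a b|)).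
exact: sumr_ge0.
Qed.

Definition flow_bound (K : R) : Prop :=
  forall (t : R) h, balanced c h -> K * norm1 h <= t ->
  exists F : T -> T -> R, [/\ forall x y, 0 <= F x y, forall x y, F x y = F y x &
    forall x, \sum_(y | e x y) F x y = t * (gdeg e x)%:R + h x].

Lemma symmetric_flow : exists K, flow_bound K.
Proof.
have [K HK] := edge_load_surj; exists (2 * K) => t h Bh Kt.
have [C [HC Cb]] := HK h Bh.
exists (fun x y => t + (C x y + C y x)); split => [x y|x y|x].
- have := Cb x y; have := Cb y x; rewrite !ler_norml => /andP[Cyx _] /andP[Cxy _].
  by move: Kt; rewrite -mulrA; lra.
- by rewrite [C y x + _]addrC.
rewrite big_split /= -HC /edge_load; congr (_ + _).
by rewrite big_mkcond /= sum_nbr_const.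
Qed.

Section LazyWalk.
Variables (u v : T) (beta : R).
Hypothesis beta_gt0 : 0 < beta.
Hypothesis beta_lt1 : beta < 1.

Lemma beta01 : 0 <= beta <= 1.
Proof. by rewrite !ltW. Qed.

Definition far_mass k : R := \sum_(x | c x != c u (+) odd k) walk_dist e beta v k x.

Lemma far_mass_step k : far_mass k.+1 - 2^-1 = (1 - 2 * beta) * (far_mass k - 2^-1).
Proof.
rewrite /far_mass walk_distS (eq_bigl (fun x => c x == c u (+) odd k)) => [|x]; last first.
  by rewrite /=; case: (c x); case: (c u); case: (odd k).
rewrite class_kapply.
have := sum_class_compl (walk_dist e beta v k) (c u (+) odd k).
rewrite walk_dist_sum1 //; set A := \sum_(x | _ == _) _; set p := \sum_(x | _ != _) _.
move=> Ap; have -> : A = 1 - p by lra.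
by field.
Qed.

Lemma far_mass_dev k : `|far_mass k - 2^-1| = 2^-1 * `|1 - 2 * beta| ^+ k.
Proof.
elim: k => [|k IH]; last by rewrite far_mass_step normrM IH exprS mulrCA.
rewrite /far_mass walk_distE /kpow /= sum_dirac_cond expr0 mulr1.
have half : 1 - 2^-1 = 2^-1 :> R by field.
by case: (_ != _); rewrite /= ?sub0r ?normrN ?half ger0_norm // invr_ge0 ler0n.
Qed.

Lemma far_mass_cvg : far_mass @ \oo --> (2^-1 : R).
Proof.
have q1 : `| `|1 - 2 * beta| | < 1.
  by rewrite normr_id ltr_norml; apply/andP; split; move: beta_gt0 beta_lt1; lra.
apply/cvgrPdist_le => eps eps0.
have /cvgrPdist_le /(_ eps eps0) [N _ HN] := cvg_expr q1.
exists N => // k /= Nk; rewrite distrC far_mass_dev.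
have := HN k Nk; rewrite /= sub0r normrN ger0_norm ?exprn_ge0 // => le_eps.
by apply: le_trans le_eps; rewrite ler_piMl ?exprn_ge0 // invf_le1 ?ltr0n ?ler1n.
Qed.

Lemma far_mass_le_wasserstein k :
  far_mass k <= wasserstein e (walk_dist e 0 u k) (walk_dist e beta v k).
Proof.
have g01 : 0 <= (0 : R) <= 1 by rewrite lexx ler01.
have mu0 x : 0 <= walk_dist e (0 : R) u k x by exact: walk_dist_ge0.
have nu0 x : 0 <= walk_dist e beta v k x by exact: (walk_dist_ge0 _ _ _ _ beta01).
apply: le_trans (mass_gain_le_wasserstein e (fun x => c x != c u (+) odd k) mu0 nu0 _ _);
  rewrite ?walk_dist_sum1 //= [X in _ - X]sum_class_neg walk0_class_mass.
suff -> : (~~ (c u (+) odd k) == c u (+) odd k)%:R = 0 :> R by rewrite subr0.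
by case: (c u (+) odd k).
Qed.

(* The load that a correction of the uniform flow [2 * far_mass k / vol e] per
   edge must carry for the flow to move the simple walk onto the lazy one. *)
Definition lazy_dev k x : R :=
  (walk_dist e 0 u k x - stationary_on (c u (+) odd k) x) +
  (if c x == c u (+) odd k then stationary e x - walk_dist e beta v k x
   else walk_dist e beta v k x - stationary e x) -
  (2 * far_mass k - 1) * stationary e x.

Lemma lazy_dev_norm1_le k : norm1 (lazy_dev k) <=
  norm1 (fun x => walk_dist e 0 u k x - stationary_on (c u (+) odd k) x) +
  norm1 (fun x => walk_dist e beta v k x - stationary e x) + `|2 * far_mass k - 1|.
Proof.
have -> : `|2 * far_mass k - 1| = \sum_x `|2 * far_mass k - 1| * stationary e x.
  by rewrite -big_distrr /= stationary_sum1 // mulr1.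
rewrite /norm1 -!big_split /=.
apply: ler_sum => x _; rewrite /lazy_dev.
apply: le_trans (ler_normB _ _) _; rewrite normrM (ger0_norm (stationary_ge0 deg_gt0 T_gt0 _)) //.
rewrite lerD2r; apply: le_trans (ler_normD _ _) _; rewrite lerD2l.
by case: ifP; rewrite // -normrN opprB.
Qed.

Lemma lazy_dev_cvg0 : (fun k => norm1 (lazy_dev k)) @ \oo --> 0.
Proof.
apply: (squeeze_cvg0 (fun k => norm1_ge0 _) lazy_dev_norm1_le).
have tau := walk0_cvg_stationary_on u.
have nu_cvg : (fun k => norm1 (fun x => walk_dist e beta v k x - stationary e x)) @ \oo --> 0.
  apply: walk_dist_cvg_stationary => //; first exact: beta01.
  by apply: (@walk_dist_primitive _ _ _ deg_gt0 beta v) => //; [rewrite (ltW beta_gt0) | left].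
have far : (fun k => `|2 * far_mass k - 1|) @ \oo --> 0.
  have := cvg_norm (cvgB (cvgMl_tmp (a := 2) far_mass_cvg) (cvg_cst (1 : R))).
  by rewrite mulfV // subrr normr0; apply.
by have := cvgD (cvgD tau nu_cvg) far; rewrite !addr0; apply.
Qed.

Lemma lazy_dev_balanced k : balanced c (lazy_dev k).
Proof.
set s := c u (+) odd k; move=> b; rewrite /lazy_dev.
rewrite big_split big_split /= sumrB sumrN walk0_class_mass class_stationary_on subrr add0r.
rewrite -big_distrr /= class_stationary.
have [->|nb] := eqVneq b s.
  rewrite (eq_bigr (fun x => stationary e x - walk_dist e beta v k x)) => [|x /eqP ->]; last first.
    by rewrite eqxx.
  have nu_s : \sum_(x | c x == s) walk_dist e beta v k x = 1 - far_mass k.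
    by rewrite -(walk_dist_sum1 deg_gt0 beta v k) -(sum_class_compl _ s) addrK.
  by rewrite sumrB class_stationary nu_s; field.
rewrite (eq_bigr (fun x => walk_dist e beta v k x - stationary e x)) => [|x /eqP cx]; last first.
  by rewrite cx (negbTE nb).
have -> : b = ~~ s by move: nb; case: b; case: s.
by rewrite sumrB class_stationary -sum_class_neg /far_mass -/s; field.
Qed.

Lemma wasserstein_le_far_mass_of K k : flow_bound K ->
  K * norm1 (lazy_dev k) <= 2 * far_mass k / vol e ->
  wasserstein e (walk_dist e 0 u k) (walk_dist e beta v k) <= far_mass k.
Proof.
move=> HK bound; have [F [F0 Fsym Frow]] := HK _ _ (lazy_dev_balanced k) bound.
set s := c u (+) odd k.
have load x : 2 * far_mass k / vol e * (gdeg e x)%:R = 2 * far_mass k * stationary e x.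
  by rewrite mulrAC -mulrA.
apply: (wasserstein_le_cut_flow (A := fun x => c x == s) eirr _ _ F0) => [x y|y|x|y].
- by move/c_edge ->; case: (c x); case: s.
- exact: (walk_dist_ge0 _ _ _ _ beta01).
- case: ifP => cx; last by apply: walk0_off_class; rewrite cx.
  by rewrite Frow load /lazy_dev cx /stationary_on cx; ring.
move=> cy; rewrite (eq_bigl (e y)) => [|x]; last by rewrite esym.
under eq_bigr do rewrite Fsym.
rewrite Frow load /lazy_dev (negbTE cy) /stationary_on (negbTE cy) walk0_off_class //.
by ring.
Qed.

Lemma wasserstein_le_far_mass :
  \forall k \near \oo, wasserstein e (walk_dist e 0 u k) (walk_dist e beta v k) <= far_mass k.
Proof.
have [K HK] := symmetric_flow; have vol0 : 0 < vol e :> R by exact: vol_gt0.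
near=> k; apply: (wasserstein_le_far_mass_of HK).
have Kdev : K * norm1 (lazy_dev k) <= (2 * vol e)^-1.
  near: k; apply: (cvgr_le (K * 0)); first exact: (cvgMl_tmp lazy_dev_cvg0).
  by rewrite mulr0 invr_gt0 mulr_gt0.
have far4 : 4^-1 <= far_mass k.
  near: k; apply: (cvgr_ge (2^-1 : R)); first exact: far_mass_cvg.
  by rewrite ltf_pV2 ?posrE ?ltr0n // ltr_nat.
apply: le_trans Kdev _; rewrite invfM ler_pM2r ?invr_gt0 //.
have : (2 : R) * 4^-1 = 2^-1 by field.
lra.
Unshelve. all: by end_near.
Qed.

Lemma wasserstein_lazy_eventually : exists N, forall k, (N <= k)%N ->
  `|wasserstein e (walk_dist e 0 u k) (walk_dist e beta v k) - 2^-1| =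
  2^-1 * `|1 - 2 * beta| ^+ k.
Proof.
have [N _ HN] := wasserstein_le_far_mass; exists N => k Nk.
suff -> : wasserstein e (walk_dist e 0 u k) (walk_dist e beta v k) = far_mass k.
  exact: far_mass_dev.
by apply/eqP; rewrite eq_le HN // far_mass_le_wasserstein.
Qed.

End LazyWalk.

End Bipartite.
Arguments stationary_on {R T} e c b x.

Lemma wasserstein_isolated (R : realType) (T : finType) (e : rel T) (x : T)
    (mu nu : T -> R) :
  connected_graph e -> gdeg e x = 0%N -> wasserstein e mu nu = 0.
Proof.
move=> hconn deg0; apply: wasserstein_singleton => a b.
have only y : y = x.
  have /connectP [[|z p] /= xp ->] // := hconn x y.
  case/andP: xp => exz _; move/eqP: deg0; rewrite cards_eq0 => /eqP no_nbr.
  have : z \in [set y | e x y]%SET by rewrite inE.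
  by rewrite no_nbr inE.
by rewrite (only a) (only b).
Qed.

Lemma W_guvab_cases (R : realType) (T : finType) (e : rel T) (u v : T) (alpha beta : R) :
  simple_graph e -> connected_graph e -> 0 <= alpha -> alpha <= beta -> beta < 1 ->
  [\/ W_guvab e u v alpha beta @ \oo --> 0,
      forall k, 1 <= W_guvab e u v alpha beta k |
      exists N, forall k, (N <= k)%N ->
        `|W_guvab e u v alpha beta k - 2^-1| = 2^-1 * `|1 - 2 * beta| ^+ k].
Proof.
move=> [esym eirr] hconn a0 ab b1; rewrite /W_guvab.
have T_gt0 : (0 < #|T|)%N by apply/card_gt0P; exists u.
have [deg_gt0|] := pselect (forall x, 0 < gdeg e x)%N; last first.
  move=> /existsNP [x /negP]; rewrite -eqn0Ngt => /eqP deg0; constructor 1.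
  by under eq_fun do rewrite (wasserstein_isolated _ _ hconn deg0); exact: cvg_cst.
have a01 : 0 <= alpha <= 1 by rewrite a0 ltW // (le_lt_trans ab b1).
have b01 : 0 <= beta <= 1 by rewrite (le_trans a0 ab) ltW.
have [aperiodic|] := pselect (0 < alpha \/ exists2 m, odd m & has_walk e m u u).
  have aperiodic_b : 0 < beta \/ exists2 m, odd m & has_walk e m u u.
    by case: aperiodic => [a_gt0|]; [left; exact: lt_le_trans a_gt0 ab | right].
  constructor 1; apply: (wasserstein_cvg0 deg_gt0 a01 b01 (rho := fun _ => stationary e)).
    apply: (walk_dist_cvg_stationary esym deg_gt0 T_gt0 u a01).
    by apply: (@walk_dist_primitive _ _ _ deg_gt0 alpha u) => //; rewrite a0 (le_lt_trans ab b1).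
  apply: (walk_dist_cvg_stationary esym deg_gt0 T_gt0 v b01).
  by apply: (@walk_dist_primitive _ _ _ deg_gt0 beta u) => //; rewrite (le_trans a0 ab) b1.
move=> /not_orP [/negP]; rewrite -leNgt => a_le0 no_odd.
have a_eq0 : alpha = 0 by apply/eqP; rewrite eq_le a_le0 a0.
subst alpha.
have [c c_edge] : exists c : T -> bool, forall x y, e x y -> c y = ~~ c x.
  apply: (bipartition esym (r := u)) => // m rm; apply/negP => odd_m.
  by apply: no_odd; exists m.
have [b_gt0|b_le0] := ltrP 0 beta.
  by constructor 3; exact: (wasserstein_lazy_eventually esym eirr hconn c_edge deg_gt0 T_gt0).
have b_eq0 : beta = 0 by apply/eqP; rewrite eq_le b_le0 ab.
subst beta.
have [cvu|cvu] := eqVneq (c v) (c u); last first.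
  by constructor 2 => k; exact: (wasserstein_ge1_opposite R c_edge deg_gt0).
constructor 1.
apply: (wasserstein_cvg0 deg_gt0 a01 a01 (rho := fun k => stationary_on e c (c u (+) odd k))).
  exact: (walk0_cvg_stationary_on esym hconn c_edge deg_gt0 T_gt0).
by rewrite -cvu; exact: (walk0_cvg_stationary_on esym hconn c_edge deg_gt0 T_gt0).
Qed.

Theorem theorem5p7 (R : realType) (T : finType) (e : rel T) (u v : T)
  (alpha beta : R) :
  simple_graph e -> connected_graph e ->
  0 <= alpha -> alpha <= beta -> beta <= 1 ->
  W_guvab e u v alpha beta @ \oo --> (2^-1 : R) ->
  beta < 1 ->
  exists N : nat, forall k : nat, (N <= k)%N ->
    `|W_guvab e u v alpha beta k - 2^-1| = 2^-1 * `|1 - 2 * beta| ^+ k.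
Proof.
move=> simple conn a0 ab _ Wlim b1.
case: (W_guvab_cases u v simple conn a0 ab b1) => [W0|W1|//].
  have : (2^-1 : R) <= 0 by apply: (ler_cvg_to Wlim W0); apply: nearW => k.
  by rewrite invr_le0 lern0.
have : (1 : R) <= 2^-1 by apply: (ler_cvg_to (cvg_cst _) Wlim); apply: nearW.
by rewrite invf_ge1 ?ltr0n // lern1.
Qed.
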